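(* Let $X$ be a finite $T_0$ topological space and let $f,g\in \mathrm{Homeo}(X)$. Then $f$ is isotopic to $g$ if and only if $f=g$. In particular, $\mathrm{Mod}(X)=\mathrm{Homeo}(X)$.
   Context: $\mathrm{Homeo}(X)$ is the group of homeomorphisms of $X$. Two homeomorphisms $f,g$ of $X$ are isotopic if there is a continuous map $H:X\times [0,1]\to X$ such that each $H_t=H(\cdot,t)$ is a homeomorphism of $X$, $H_0=f$ and $H_1=g$. The mapping class group $\mathrm{Mod}(X)$ is the group of isotopy classes of homeomorphisms of $X$. *)

From HB Require Import structures.
From mathcomp Require Import all_boot all_order all_algebra.
From mathcomp Require Import all_classical all_reals all_analysis.
Set Implicit Arguments. Unset Strict Implicit. Unset Printing Implicit Defensive.
Import Order.TTheory GRing.Theory Num.Theory.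
Local Open Scope classical_set_scope.
Local Open Scope ring_scope.

Definition homeo (X : topologicalType) (f : X -> X) : Prop :=
  exists g : X -> X, [/\ cancel f g, cancel g f, continuous f & continuous g].

Definition isotopic (R : realType) (X : topologicalType) (f g : X -> X) : Prop :=
  exists H : X * R -> X,
    [/\ {within [set: X] `*` `[0%R, 1%R], continuous H},
        (forall t : R, t \in `[0%R, 1%R] -> homeo (fun x => H (x, t))),
        (forall x, H (x, 0%R) = f x) &
        (forall x, H (x, 1%R) = g x)].

From HB Require Import structures.
From mathcomp Require Import all_boot all_order all_algebra.
From mathcomp Require Import all_classical all_reals all_analysis.
Import Order.TTheory GRing.Theory Num.Theory.
Local Open Scope classical_set_scope.

(* On any space, write y <= z ("y specializes z") when every open set
   containing z contains y.  Continuous maps are monotone for <=, and <= is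
   antisymmetric exactly on T0 spaces.  In a finite space every point z has
   a neighbourhood (the intersection of its finitely many open
   neighbourhoods) consisting of points y <= z.

   Key rigidity fact: if a, b are homeomorphisms of a finite T0 space with
   a x <= b x for all x, then a = b; indeed b^-1 o a is an injective map that
   sends each finite down-set {y | y <= x} into itself, hence onto itself,
   which forces it to fix x.

   Given an isotopy H, continuity and finiteness give, near each t in [0,1],
   H_s x <= H_t x for all x at once; rigidity then makes t |-> H_t locally
   constant on [0,1].  A locally constant function on a connected set is
   constant, so f = H_0 = H_1 = g. *)

Lemma near_forall_finite {T : eqType} {U} (F : set_system U) {FF : Filter F}
    {P : T -> U -> Prop} :
  finite_set [set: T] -> (forall x, F (P x)) -> F (fun u => forall x, P x u).
Proof.
move=> /finite_seqP[s hs] hP.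
suff: F (fun u => forall x, x \in s -> P x u).
  apply: filterS => u Pu x; apply: Pu.
  by have : [set: T] x by []; rewrite hs.
elim: s {hs} => [|y s IH]; first by apply: filterE.
move: (hP y) IH; apply: filterS2 => u Py Ps x.
by rewrite inE => /orP[/eqP->|/Ps].
Qed.

Lemma finite_inj_onto {T : eqType} {A : set T} {phi : T -> T} :
  finite_set A -> injective phi -> (forall y, A y -> A (phi y)) ->
  forall x, A x -> exists y, A y /\ phi y = x.
Proof.
move=> /finite_seqP[s ->] phi_inj phiA x xs.
set s' := undup s.
have uniq_img : uniq (map phi s') by rewrite map_inj_uniq ?undup_uniq.
have img_sub : {subset map phi s' <= s'}.
  by move=> z /mapP[y]; rewrite !mem_undup => ys ->; apply: phiA.
have [_ img_eq] := uniq_min_size uniq_img img_sub (eq_leq (esym (size_map _ _))).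
have : x \in map phi s' by rewrite img_eq mem_undup.
by case/mapP=> y; rewrite mem_undup => ys ->; exists y.
Qed.

Lemma connected_locally_constant {T : topologicalType} {Y : Type}
    {J : set T} {F : T -> Y} :
  connected J -> (forall t, J t -> \forall s \near t, J s -> F s = F t) ->
  forall s t, J s -> J t -> F s = F t.
Proof.
move=> Jc loc s t Js Jt.
pose B := [set u | J u /\ F u = F t].
suff BJ : B = J by have [_ ->] : B s by rewrite BJ.
apply: Jc; first by exists t.
- exists (interior [set u | J u -> B u]); first exact: open_interior.
  apply/seteqP; split => u.
    move=> [Ju Fu]; split => //.
    by apply: filterS (loc u Ju) => v Fv Jv; split; rewrite ?Fv.
  by move=> [Ju Bu]; exact: (nbhs_singleton Bu Ju).
- exists (~` interior [set u | J u -> ~ B u]).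
    by apply: open_closedC; exact: open_interior.
  apply/seteqP; split => u.
    by move=> [Ju Fu]; split => // nBu; exact: (nbhs_singleton nBu Ju).
  move=> [Ju nBu]; apply: contra_notP nBu => nBu.
  apply: filterS (loc u Ju) => v Fv Jv [_ Fvt]; apply: nBu.
  by split; rewrite -?Fv.
Qed.

Definition specializes {X : topologicalType} (y z : X) :=
  forall O : set X, open O -> O z -> O y.

Lemma specializes_refl {X : topologicalType} (y : X) : specializes y y.
Proof. by []. Qed.

Lemma specializes_trans {X : topologicalType} {x y z : X} :
  specializes x y -> specializes y z -> specializes x z.
Proof. by move=> xy yz O oO Oz; apply: xy => //; apply: yz. Qed.

Lemma continuous_specializes {X : topologicalType} {k : X -> X} {y z : X} :
  continuous k -> specializes y z -> specializes (k y) (k z).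
Proof. by move=> /continuousP kc yz O oO; exact: yz (kc _ oO). Qed.

Section FiniteT0Space.
Context {X : topologicalType}.
Hypothesis Xfin : finite_set [set: X].
Hypothesis XT0 : kolmogorov_space X.

Lemma specializes_anti {y z : X} :
  specializes y z -> specializes z y -> y = z.
Proof.
move=> yz zy; apply/eqP; apply: contraT => /XT0[A [[]|[]]].
- rewrite inE nbhsE => -[B [oB By] BA]; rewrite inE => nAz.
  by exfalso; apply: nAz; apply: BA; apply: zy.
- rewrite inE nbhsE => -[B [oB Bz] BA]; rewrite inE => nAy.
  by exfalso; apply: nAy; apply: BA; apply: yz.
Qed.

Lemma near_specializes (z : X) : \forall w \near z, specializes w z.
Proof.
suff : \forall w \near z, forall y, w = y -> specializes y z.
  by apply: filterS => w /(_ w erefl).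
apply: (near_forall_finite _ Xfin) => y.
have [yz|nyz] := pselect (specializes y z); first by apply: filterE.
have [V [oV Vz nVy]] : exists V : set X, [/\ open V, V z & ~ V y].
  apply: contra_notP nyz => noV O oO Oz.
  by apply: contra_notP noV => nOy; exists O.
by apply: filterS (open_nbhs_nbhs (conj oV Vz)) => w Vw wy; rewrite -wy in nVy.
Qed.

Lemma homeo_specializes_eq {a b : X -> X} :
  homeo a -> homeo b -> (forall x, specializes (a x) (b x)) -> a = b.
Proof.
move=> [a' [aK _ _ _]] [b' [bK b'K _ b'c]] ab.
pose phi := b' \o a.
have phi_le x : specializes (phi x) x.
  by have := continuous_specializes b'c (ab x); rewrite bK.
have phi_inj : injective phi := inj_comp (can_inj b'K) (can_inj aK).
apply: funext => x.
have fin_down : finite_set [set y | specializes y x].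
  exact: sub_finite_set Xfin.
have [y [yx phiy]] := finite_inj_onto fin_down phi_inj
  (fun y hy => specializes_trans (phi_le y) hy) x (specializes_refl x).
have xy : specializes x y by rewrite -{1}phiy; apply: phi_le.
move: phiy; rewrite (specializes_anti yx xy) => phix.
by rewrite -[LHS]b'K; congr b.
Qed.

Lemma homeo_family_locally_constant {P : topologicalType} {J : set P}
    {H : X * P -> X} :
  {within [set: X] `*` J, continuous H} ->
  (forall t, J t -> homeo (fun x => H (x, t))) ->
  forall t, J t ->
    \forall s \near t, J s -> (fun x => H (x, s)) = (fun x => H (x, t)).
Proof.
move=> Hc Hh t Jt.
have Hc' := (subspace_continuousP _ _).1 Hc.
have near_le x : \forall s \near t, J s -> specializes (H (x, s)) (H (x, t)).
  have := Hc' (x, t) (conj Logic.I Jt) _ (near_specializes (H (x, t))).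
  rewrite nbhs_simpl /= => -[[A B] /= [nA nB] AB].
  apply: filterS nB => s Bs Js.
  by apply: (AB (x, s)); split => //; apply: nbhs_singleton.
have near_all_le : \forall s \near t,
    forall x, J s -> specializes (H (x, s)) (H (x, t)).
  exact: near_forall_finite Xfin near_le.
apply: filterS near_all_le => s le_st Js.
exact: (homeo_specializes_eq (Hh s Js) (Hh t Jt) (fun x => le_st x Js)).
Qed.

End FiniteT0Space.

Theorem theorem1p2 (R : realType) (X : topologicalType)
  (Xfin : finite_set [set: X]) (XT0 : kolmogorov_space X)
  (f g : X -> X) (hf : homeo f) (hg : homeo g) :
  isotopic R f g <-> f = g.
Proof.
split; last first.
  move=> <-; have [_ [_ _ fc _]] := hf.
  exists (fun p => f p.1); split => //.
  apply: continuous_subspaceT => p.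
  by apply: continuous_comp; [exact: cvg_fst | exact: fc].
move=> [H [Hc Hh H0 H1]].
set J := `[0%R, 1%R] in Hc Hh.
have Jc : connected J by apply/connected_intervalP; exact: interval_is_interval.
have J0 : J 0%R by rewrite /J /= in_itv /= lexx ler01.
have J1 : J 1%R by rewrite /J /= in_itv /= lexx ler01.
have H01 := connected_locally_constant Jc
  (homeo_family_locally_constant Xfin XT0 Hc Hh) _ _ J0 J1.
apply/funext => x.
by have := congr1 (fun h => h x) H01; rewrite /= H0 H1.
Qed.
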